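(* If $0\le\Delta<1$ and $0<\gamma<\frac{2(1+\Delta)}{\zeta\sigma_{\max}^2}$, then $\lambda_{2,\max}<1$.
   Context: $\sigma_1^2\ge\dots\ge\sigma_n^2\ge0$ are the eigenvalues of $\boldsymbol A\boldsymbol A^T$ for $\boldsymbol A\in\mathbb R^{n\times d}$, $\sigma_{\max}^2$ the largest; $\zeta\in(0,1]$. For $j\in[n]$: $\Omega_j=1-\gamma\zeta\sigma_j^2+\Delta$ and $\lambda_{2,j}=\frac{-2\Delta+\Omega_j^2+\sqrt{\Omega_j^2(\Omega_j^2-4\Delta)}}{2}$ (complex square root if the argument is negative). $\lambda_{2,\max}=\max\{|\lambda_{2,j}|:\sigma_j^2>0\}$. *)

From HB Require Import structures.
From mathcomp Require Import all_boot all_order all_algebra.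
From mathcomp Require Import complex.
Set Implicit Arguments. Unset Strict Implicit. Unset Printing Implicit Defensive.
Import Order.TTheory GRing.Theory Num.Theory.
Local Open Scope ring_scope.

Definition csqrt_real (R : rcfType) (x : R) : R[i] :=
  if 0 <= x then Complex (Num.sqrt x) 0 else Complex 0 (Num.sqrt (- x)).

(* Omega_j = 1 - gamma * zeta * sigma_j^2 + Delta, where s = sigma_j^2 *)
Definition Omega (R : rcfType) (gamma zeta Delta s : R) : R :=
  1 - gamma * zeta * s + Delta.

Definition lambda2 (R : rcfType) (gamma zeta Delta s : R) : R[i] :=
  let O := Omega gamma zeta Delta s in
  (Complex (- (2 * Delta) + O ^+ 2) 0 + csqrt_real (O ^+ 2 * (O ^+ 2 - 4 * Delta))) / 2%:R.

(* sigma_max^2 : largest eigenvalue (the eigenvalues of A A^T are >= 0) *)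
Definition sigma_max2 (R : rcfType) (n : nat) (s : 'I_n -> R) : R :=
  \big[Num.max/0]_(j < n) s j.

Definition lambda2_max (R : rcfType) (n : nat) (s : 'I_n -> R)
    (gamma zeta Delta : R) : R :=
  \big[Num.max/0]_(j < n | 0 < s j) ComplexField.Normc.normc (lambda2 gamma zeta Delta (s j)).

(* Write x = Omega^2 and y = x (x - 4 Delta).  If y < 0, lambda2 has real part
   (x - 2 Delta)/2 and imaginary part sqrt(-y)/2, so |lambda2|^2 = Delta^2.  If
   y >= 0, lambda2 is real and lies in (-1, 1); the upper bound sqrt y < 2 + 2 Delta - x
   squares to x < (1 + Delta)^2, i.e. |Omega| < 1 + Delta, which is exactly the
   step-size condition on gamma since 0 < sigma_j^2 <= sigma_max^2. *)
From HB Require Import structures.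
From mathcomp Require Import all_boot all_order all_algebra.
From mathcomp Require Import complex.
From mathcomp Require Import ring lra.
Import Order.TTheory GRing.Theory Num.Theory.
Local Open Scope ring_scope.

Notation normc := ComplexField.Normc.normc.

Section Lambda2.
Variable R : rcfType.

Lemma sqrtr_lt (x y : R) : 0 < y -> x < y ^+ 2 -> Num.sqrt x < y.
Proof.
by move=> y_gt0 xy; rewrite -(gtr0_norm y_gt0) -sqrtr_sqr ltr_sqrt ?exprn_gt0.
Qed.

Lemma normc_div2 (z : R[i]) : normc (z / 2%:R) = normc z / 2.
Proof.
rewrite ComplexField.Normc.normcM ComplexField.Normc.normcV; congr (_ / _).
by rewrite /ComplexField.Normc.normc /= addr0 expr0n addr0 -[1 + 1]/(2%:R) sqrtr_sqr normr_nat.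
Qed.

Lemma normc_lambda2 (gamma zeta Delta s : R) :
  let x := Omega gamma zeta Delta s ^+ 2 in
  let y := x * (x - 4 * Delta) in
  normc (lambda2 gamma zeta Delta s) =
    if 0 <= y then `|x - 2 * Delta + Num.sqrt y| / 2 else `|Delta|.
Proof.
move=> x y; rewrite /lambda2 -/x -/y normc_div2 /csqrt_real.
case: ifP => [_ | /negbT]; rewrite /ComplexField.Normc.normc /=.
  by rewrite !addr0 expr0n addr0 sqrtr_sqr (addrC (- _)).
rewrite -ltNge => y_lt0.
rewrite addr0 add0r sqr_sqrtr ?oppr_ge0 ?ltW //.
have -> : (- (2 * Delta) + x) ^+ 2 - y = (2 * Delta) ^+ 2 by rewrite /y; ring.
by rewrite sqrtr_sqr normrM ger0_norm // [2 * _]mulrC mulfK ?pnatr_eq0.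
Qed.

Lemma real_branch_lt2 (Delta x : R) : 0 <= Delta -> Delta < 1 ->
  0 <= x -> x < (1 + Delta) ^+ 2 -> 0 <= x * (x - 4 * Delta) ->
  `|x - 2 * Delta + Num.sqrt (x * (x - 4 * Delta))| < 2.
Proof.
move=> D_ge0 D_lt1 x_ge0 x_lt y_ge0.
have t_ge0 := sqrtr_ge0 (x * (x - 4 * Delta)).
have tt := sqr_sqrtr y_ge0.
set t := Num.sqrt _ in t_ge0 tt *.
have room : 0 < 2 + 2 * Delta - x by nra.
have t_lt : t < 2 + 2 * Delta - x by apply: sqrtr_lt => //; nra.
rewrite ltr_norml; apply/andP; split; last by lra.
(* 0 <= x (x - 4 Delta) leaves only x = 0 or x >= 4 Delta *)
have [x_lt4D | x_ge4D] := ltP x (4 * Delta); last by lra.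
have -> : x = 0 by nra.
lra.
Qed.

Lemma normc_lambda2_lt1 (gamma zeta Delta s : R) : 0 <= Delta -> Delta < 1 ->
  `|Omega gamma zeta Delta s| < 1 + Delta ->
  normc (lambda2 gamma zeta Delta s) < 1.
Proof.
move=> D_ge0 D_lt1 O_lt; rewrite normc_lambda2 /=; case: ifP => [y_ge0|_].
  rewrite ltr_pdivrMr // mul1r real_branch_lt2 ?sqr_ge0 //.
  by rewrite -real_normK ?num_real // ltr_pXn2r // ?nnegrE ?normr_ge0 //; lra.
by rewrite ger0_norm.
Qed.

Lemma normr_Omega_lt (gamma zeta Delta s : R) :
  0 < gamma * zeta * s < 2 * (1 + Delta) ->
  `|Omega gamma zeta Delta s| < 1 + Delta.
Proof. by move=> /andP[h0 h1]; rewrite /Omega ltr_norml; apply/andP; split; lra. Qed.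

Lemma le_sigma_max2 (n : nat) (s : 'I_n -> R) (j : 'I_n) : s j <= sigma_max2 s.
Proof. exact: le_bigmax. Qed.

End Lambda2.

Theorem proposition13 (R : rcfType) (n d : nat) (A : 'M[R]_(n, d))
  (s : 'I_n -> R)
  (s_eig : char_poly (A *m A^T) = \prod_(j < n) ('X - (s j)%:P))
  (s_sorted : forall i j : 'I_n, (i <= j)%N -> s j <= s i)
  (zeta gamma Delta : R) (hzeta0 : 0 < zeta) (hzeta1 : zeta <= 1)
  (hD0 : 0 <= Delta) (hD1 : Delta < 1)
  (hg0 : 0 < gamma)
  (hg1 : gamma < 2 * (1 + Delta) / (zeta * sigma_max2 s)) :
  lambda2_max s gamma zeta Delta < 1.
Proof.
apply: (big_ind (fun x => x < 1)) => [//| x y x_lt y_lt | j sj_gt0].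
  by rewrite gt_max x_lt y_lt.
have smax_gt0 : 0 < zeta * sigma_max2 s.
  by rewrite mulr_gt0 // (lt_le_trans sj_gt0) ?le_sigma_max2.
apply: normc_lambda2_lt1 => //; apply: normr_Omega_lt.
rewrite !mulr_gt0 //=; apply: (@le_lt_trans _ _ (gamma * (zeta * sigma_max2 s))).
  by rewrite -mulrA ler_pM2l // ler_pM2l // le_sigma_max2.
by rewrite -ltr_pdivlMr.
Qed.
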